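(* Let $A,B$ be real symmetric $4\times 4$ matrices defining quadrics $\mathcal A: X^TAX=0$, $\mathcal B: X^TBX=0$ in $\mathbb{PR}^3$ with $f(\lambda)=\det(\lambda A-B)$ not identically zero. If $f(\lambda)=0$ has two identical pairs of complex conjugate roots with Segre characteristic $[(11)(11)]$, then the only possible index sequence is $\langle 2\rangle$, and in this case the QSIC comprises two non-intersecting real lines and two non-intersecting imaginary lines.
   Context: $X=(x,y,z,w)^T$ homogeneous coordinates; QSIC $=\mathcal A\cap\mathcal B$ (over $\mathbb C$). One may take $A$ nonsingular. Segre characteristic $[(11)(11)]$: $A^{-1}B$ has two distinct eigenvalues (here complex conjugate), each with two $1\times1$ Jordan blocks. $\mathrm{Id}(\lambda)$ = number of positive eigenvalues of $\lambda A-B$; when $f$ has no real root, the index sequence is $\langle s_0\rangle$ with $s_0$ the constant value of $\mathrm{Id}$ on $\mathbb R$. A line is real if it has infinitely many real points, imaginary otherwise. *)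

From HB Require Import structures.
From mathcomp Require Import all_boot all_order all_algebra.
From mathcomp Require Import complex.
Set Implicit Arguments. Unset Strict Implicit. Unset Printing Implicit Defensive.
Import Order.TTheory GRing.Theory Num.Theory.
Local Open Scope ring_scope.

Section QSIC.
Variable R : rcfType.
Local Notation C := (complex R).

Definition cmx (m n : nat) (M : 'M[R]_(m, n)) : 'M[C]_(m, n) :=
  map_mx (fun x : R => Complex x 0) M.

Definition pencil_poly (A B : 'M[R]_4) : {poly R} :=
  \det (\matrix_(i, j) ('X * (A i j)%:P - (B i j)%:P)).

Definition two_conj_double_roots (A B : 'M[R]_4) : Prop :=
  exists mu : C, Im mu != 0 /\
    map_poly (fun x : R => Complex x 0) (pencil_poly A B) =
    (Complex (lead_coef (pencil_poly A B)) 0)%:P *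
      (('X - mu%:P) ^+ 2 * ('X - (conjc mu)%:P) ^+ 2).

(* Segre characteristic [(11)(11)] with complex conjugate eigenvalues:
   A is nonsingular, A^{-1}B has exactly the two eigenvalues mu, conj mu
   (each of algebraic multiplicity 2) and each has geometric multiplicity 2,
   i.e. two 1x1 Jordan blocks per eigenvalue. *)
Definition segre_11_11_conj (A B : 'M[R]_4) : Prop :=
  A \in unitmx /\
  exists mu : C, Im mu != 0 /\
    let M := invmx (cmx A) *m cmx B in
    [/\ char_poly M = ('X - mu%:P) ^+ 2 * ('X - (conjc mu)%:P) ^+ 2,
        \rank (mu%:M - M) = 2%N & \rank ((conjc mu)%:M - M) = 2%N].

Definition pos_eig_count (M : 'M[R]_4) (k : nat) : Prop :=
  exists s : seq R, char_poly M = \prod_(x <- s) ('X - x%:P) /\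
                    count (fun x => 0 < x) s = k.

Definition on_quadric (A : 'M[R]_4) (X : 'rV[C]_4) : Prop :=
  (X *m cmx A *m X^T) 0 0 = 0.

Definition on_qsic (A B : 'M[R]_4) (X : 'rV[C]_4) : Prop :=
  on_quadric A X /\ on_quadric B X.

(* a projective line of PC^3, given by two spanning rows *)
Definition is_line (L : 'M[C]_(2, 4)) : Prop := \rank L = 2%N.

(* a line is real if it contains infinitely many (pairwise distinct
   projective) real points *)
Definition real_line (L : 'M[C]_(2, 4)) : Prop :=
  forall n : nat, exists f : 'I_n -> 'rV[R]_4,
    (forall i, f i != 0 /\ (cmx (f i) <= L)%MS) /\
    (forall i j, i != j -> \rank (col_mx (f i) (f j)) = 2%N).

Definition lines_disjoint (L1 L2 : 'M[C]_(2, 4)) : Prop :=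
  forall X : 'rV[C]_4, (X <= L1)%MS -> (X <= L2)%MS -> X = 0.

End QSIC.

(* Let E be the eigenspace of the pencil for mu, i.e. the rows u with u B = mu u A.
   The Segre characteristic makes E a plane; its conjugate is the eigenspace for
   conj mu, C^4 = E + conj E, and since A and B are symmetric these two planes are
   orthogonal for both forms.  A is nondegenerate on E, so E has an A-isotropic
   basis e1, e2.  For X = u + w with u = a e1 + b e2 in E and w = c conj e1 + d conj e2,
   both quadrics vanish at X iff A(u,u) = A(w,w) = 0, i.e. ab = cd = 0: the QSIC is
   the union of the lines <e1, conj e1>, <e2, conj e2>, which are conjugation-stable
   hence real, and <e1, conj e2>, <e2, conj e1>, which are not.
   For real l, the matrix l A - B is invertible and its Hermitian form vanishes on
   the plane <e1, conj e1>; a nondegenerate Hermitian form on C^4 with a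
   2-dimensional totally isotropic subspace has signature (2, 2), so Id(l) = 2. *)

From HB Require Import structures.
From mathcomp Require Import all_boot all_order all_algebra.
From mathcomp Require Import complex.
From mathcomp Require Import ring.
Import Order.TTheory GRing.Theory Num.Theory.
Set Implicit Arguments. Unset Strict Implicit. Unset Printing Implicit Defensive.
Local Open Scope ring_scope.

Section FreeFamilies.
Variables (F : fieldType) (n : nat).
Implicit Types (u v x : 'rV[F]_n).

Definition free2 u v := forall a b, a *: u + b *: v = 0 -> a = 0 /\ b = 0.

Definition free4 (e1 e2 e3 e4 : 'rV[F]_n) := forall a b c d,
  a *: e1 + b *: e2 + c *: e3 + d *: e4 = 0 -> [/\ a = 0, b = 0, c = 0 & d = 0].

Lemma mul_rV2_col_mx (z : 'rV[F]_(1 + 1)) u v :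
  z *m col_mx u v = z 0 0 *: u + z 0 1 *: v.
Proof.
rewrite -{1}[z]hsubmxK mul_row_col [lsubmx z]mx11_scalar [rsubmx z]mx11_scalar.
by rewrite !mul_scalar_mx !mxE; congr (z 0 _ *: _ + z 0 _ *: _); apply: val_inj.
Qed.

Lemma sub_col_mx2P u v x :
  (x <= col_mx u v)%MS <-> exists a b, x = a *: u + b *: v.
Proof.
rewrite -addsmxE; split => [/sub_addsmxP [[y z] /= ->] | [a [b ->]]].
  by exists (y 0 0), (z 0 0); rewrite -!mul_scalar_mx -!mx11_scalar.
by rewrite addmx_sub_adds // scalemx_sub.
Qed.

Lemma row_free_of_ker0 m (M : 'M[F]_(m, n)) :
  (forall z : 'rV_m, z *m M = 0 -> z = 0) -> row_free M.
Proof.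
move=> M_inj; rewrite -kermx_eq0; apply/eqP/row_matrixP => i; rewrite row0.
by apply: M_inj; rewrite -row_mul mulmx_ker row0.
Qed.

Lemma rV2_eq0 (z : 'rV[F]_(1 + 1)) : z 0 0 = 0 -> z 0 1 = 0 -> z = 0.
Proof.
move=> z0 z1; apply/rowP => -[[|[|//]] i_lt]; rewrite mxE.
  by rewrite -z0; congr (z 0 _); apply: val_inj.
by rewrite -z1; congr (z 0 _); apply: val_inj.
Qed.

Lemma free2P u v : free2 u v <-> \rank (col_mx u v) = 2%N.
Proof.
split => [uv_free | /eqP uv_rfree a b].
  apply/eqP/row_free_of_ker0 => z; rewrite mul_rV2_col_mx.
  by move=> /uv_free [z0 z1]; apply: rV2_eq0.
rewrite -!mul_scalar_mx -mul_row_col => /eqP; rewrite mulmx_free_eq0 // row_mx_eq0.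
case/andP => /eqP/matrixP/(_ 0 0) + /eqP/matrixP/(_ 0 0).
by rewrite !mxE !mulr1n.
Qed.

Lemma free2_lincomb u v a1 b1 a2 b2 : free2 u v -> a1 * b2 - a2 * b1 != 0 ->
  free2 (a1 *: u + b1 *: v) (a2 *: u + b2 *: v).
Proof.
move=> uv_free det_neq0 x y xy0.
have [ux vy] : x * a1 + y * a2 = 0 /\ x * b1 + y * b2 = 0.
  by apply: uv_free; rewrite -xy0; apply/rowP => j; rewrite !mxE; ring.
split; apply/eqP; rewrite -(mulIr_eq0 _ (rregP det_neq0)).
  have -> : x * (a1 * b2 - a2 * b1) = b2 * (x * a1 + y * a2) - a2 * (x * b1 + y * b2) by ring.
  by rewrite ux vy !mulr0 subr0.
have -> : y * (a1 * b2 - a2 * b1) = a1 * (x * b1 + y * b2) - b1 * (x * a1 + y * a2) by ring.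
by rewrite ux vy !mulr0 subr0.
Qed.

Lemma free4_swap12 (e1 e2 e3 e4 : 'rV[F]_n) : free4 e1 e2 e3 e4 -> free4 e2 e1 e3 e4.
Proof.
by move=> e_free a b c d; rewrite [a *: e2 + _]addrC => /e_free [].
Qed.

Lemma free4_swap34 (e1 e2 e3 e4 : 'rV[F]_n) : free4 e1 e2 e3 e4 -> free4 e1 e2 e4 e3.
Proof.
by move=> e_free a b c d; rewrite -addrA [c *: e4 + _]addrC addrA => /e_free [].
Qed.

Lemma free4_free2_13 (e1 e2 e3 e4 : 'rV[F]_n) : free4 e1 e2 e3 e4 -> free2 e1 e3.
Proof.
by move=> e_free a c; have := e_free a 0 c 0; rewrite !scale0r !addr0 => ac_free /ac_free [].
Qed.

Lemma free4_coef (e1 e2 e3 e4 : 'rV[F]_n) a b c d a' b' c' d' :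
  free4 e1 e2 e3 e4 ->
  a *: e1 + b *: e2 + c *: e3 + d *: e4 = a' *: e1 + b' *: e2 + c' *: e3 + d' *: e4 ->
  [/\ a = a', b = b', c = c' & d = d'].
Proof.
move=> e_free /eqP; rewrite -subr_eq0 => /eqP E.
have [] := e_free (a - a') (b - b') (c - c') (d - d').
  by rewrite -E; apply/rowP => j; rewrite !mxE; ring.
by move=> /subr0_eq-> /subr0_eq-> /subr0_eq-> /subr0_eq->.
Qed.

Lemma sub_col_mx13_free4 (e1 e2 e3 e4 : 'rV[F]_n) a b c d : free4 e1 e2 e3 e4 ->
  ((a *: e1 + b *: e2 + c *: e3 + d *: e4)%R <= col_mx e1 e3)%MS <-> b = 0 /\ d = 0.
Proof.
move=> e_free; split => [/sub_col_mx2P [x [y E]] | [-> ->]].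
  have E' : a *: e1 + b *: e2 + c *: e3 + d *: e4 = x *: e1 + 0 *: e2 + y *: e3 + 0 *: e4.
    by rewrite E !scale0r !addr0.
  by have [] := free4_coef e_free E'.
by apply/sub_col_mx2P; exists a, c; rewrite !scale0r !addr0.
Qed.

Lemma sub_col_mx_free4 (e1 e2 e3 e4 : 'rV[F]_n) a b c d : free4 e1 e2 e3 e4 ->
  let x := (a *: e1 + b *: e2 + c *: e3 + d *: e4)%R in
  [/\ (x <= col_mx e1 e3)%MS <-> b = 0 /\ d = 0, (x <= col_mx e2 e4)%MS <-> a = 0 /\ c = 0,
      (x <= col_mx e1 e4)%MS <-> b = 0 /\ c = 0 & (x <= col_mx e2 e3)%MS <-> a = 0 /\ d = 0].
Proof.
move=> e_free x.
have x12 : x = b *: e2 + a *: e1 + c *: e3 + d *: e4 by rewrite /x [a *: e1 + _]addrC.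
have x34 : x = a *: e1 + b *: e2 + d *: e4 + c *: e3 by rewrite /x -addrA [c *: e3 + _]addrC addrA.
have x1234 : x = b *: e2 + a *: e1 + d *: e4 + c *: e3 by rewrite x34 [a *: e1 + _]addrC.
split; first exact: sub_col_mx13_free4.
- by rewrite x1234; apply/sub_col_mx13_free4/free4_swap34/free4_swap12.
- by rewrite x34; apply/sub_col_mx13_free4/free4_swap34.
- by rewrite x12; apply/sub_col_mx13_free4/free4_swap12.
Qed.

Lemma col_mx_free4_disjoint (e1 e2 e3 e4 : 'rV[F]_n) x : free4 e1 e2 e3 e4 ->
  (x <= col_mx e1 e3)%MS -> (x <= col_mx e2 e4)%MS -> x = 0.
Proof.
move=> e_free /sub_col_mx2P [a [c ->]] /sub_col_mx2P [b [d E]].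
have : a *: e1 + (- b) *: e2 + c *: e3 + (- d) *: e4 = 0.
  rewrite -(subrr (b *: e2 + d *: e4)) -{1}E.
  by apply/rowP => j; rewrite !mxE; ring.
by move=> /e_free [-> _ -> _]; rewrite !scale0r addr0.
Qed.

End FreeFamilies.

Lemma free4_span (F : fieldType) (e1 e2 e3 e4 : 'rV[F]_4) : free4 e1 e2 e3 e4 ->
  forall x : 'rV_4, exists a b c d, x = a *: e1 + b *: e2 + c *: e3 + d *: e4.
Proof.
move=> e_free x.
pose P : 'M[F]_4 := col_mx (col_mx e1 e2) (col_mx e3 e4).
have mulP (z : 'rV_((1 + 1) + (1 + 1))) : z *m P = lsubmx z 0 0 *: e1 + lsubmx z 0 1 *: e2
                                + rsubmx z 0 0 *: e3 + rsubmx z 0 1 *: e4.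
  by rewrite -{1}[z]hsubmxK mul_row_col !mul_rV2_col_mx addrA.
have P_unit : P \in unitmx.
  rewrite -row_free_unit; apply: (@row_free_of_ker0 _ _ ((1 + 1) + (1 + 1))) => z.
  rewrite mulP => /e_free [z0 z1 z2 z3].
  by rewrite -[z]hsubmxK (rV2_eq0 z0 z1) (rV2_eq0 z2 z3) row_mx0.
by rewrite -(mulmxKV P_unit x) mulP; do 4 eexists.
Qed.

Lemma char_poly_similar (F : fieldType) n (P M : 'M[F]_n) :
  P \in unitmx -> char_poly (invmx P *m M *m P) = char_poly M.
Proof.
move=> P_unit; rewrite /char_poly /char_poly_mx.
set Pi := map_mx polyC (invmx P); set Pp := map_mx polyC P.
have PiP : Pi *m Pp = 1%:M by rewrite -map_mxM mulVmx // map_mx1.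
have -> : 'X%:M - map_mx polyC (invmx P *m M *m P) = Pi *m ('X%:M - map_mx polyC M) *m Pp.
  rewrite mulmxBr mulmxBl !map_mxM -/Pi -/Pp; congr (_ - _).
  by rewrite scalar_mxC -mulmxA PiP mulmx1.
by rewrite !det_mulmx mulrAC -det_mulmx PiP det1 mul1r.
Qed.

Lemma rank_diag_mx_le (F : fieldType) n (v : 'rV[F]_n) :
  (\rank (diag_mx v) <= #|[pred i | (v 0 i != 0)%R]|)%N.
Proof.
rewrite -sum1_card big_mkcond /= diag_mx_sum_delta.
apply: (big_rec2 (fun (M : 'M[F]_n) r => \rank M <= r)%N); first by rewrite mxrank0.
move=> i M r _ rkM.
apply: leq_trans (mxrankS (addmx_sub_adds (submx_refl (v 0 i *: delta_mx i i)) (submx_refl M))) _.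
apply: leq_trans (mxrank_adds_leqif _ _) _; apply: leq_add => //; rewrite inE.
have [->|vi_neq0] := eqVneq (v 0 i) 0; first by rewrite scale0r mxrank0.
by rewrite (eqmx_scale _ vi_neq0) mxrank_delta.
Qed.

Lemma isotropic_pair (C : numClosedFieldType) (p r t : C) :
  (forall a b, a * p + b * r = 0 -> a * r + b * t = 0 -> a = 0 /\ b = 0) ->
  exists a1 b1 a2 b2,
    [/\ a1 ^+ 2 * p + 2 * a1 * b1 * r + b1 ^+ 2 * t = 0,
        a2 ^+ 2 * p + 2 * a2 * b2 * r + b2 ^+ 2 * t = 0 &
        a1 * b2 - a2 * b1 != 0].
Proof.
move=> nondeg; have two_neq0 : (2 : C) != 0 by rewrite pnatr_eq0.
have [p0|p_neq0] := eqVneq p 0.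
  have r_neq0 : r != 0.
    apply/eqP => r0; have [] := nondeg 1 0; rewrite ?p0 ?r0; try ring.
    by move/eqP; rewrite oner_eq0.
  exists 1, 0, t, (- (2 * r)); split; rewrite ?p0; try ring.
  by rewrite mulr0 subr0 mul1r oppr_eq0 mulf_neq0.
pose s := sqrtC (r ^+ 2 - p * t).
have s2 : s ^+ 2 = r ^+ 2 - p * t by rewrite sqrtCK.
have s_neq0 : s != 0.
  apply/eqP => s0; move: s2; rewrite s0 expr0n /= => /eqP; rewrite eq_sym subr_eq0 => /eqP rpt.
  have [] := nondeg r (- p); first ring.
    by rewrite -expr2 rpt; ring.
  by move=> _ /eqP; rewrite oppr_eq0 (negbTE p_neq0).
(* The null directions of p a^2 + 2 r a b + t b^2 are (s - r : p) and (- s - r : p). *)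
exists (s - r), p, (- s - r), p; split.
- transitivity (p * (s ^+ 2 - r ^+ 2 + p * t)); first ring.
  by rewrite s2; ring.
- transitivity (p * (s ^+ 2 - r ^+ 2 + p * t)); first ring.
  by rewrite s2; ring.
have -> : (s - r) * p - (- s - r) * p = 2 * s * p by ring.
by rewrite !mulf_neq0.
Qed.

Lemma count_index_enum (T : finType) (P : pred T) : count P (index_enum T) = #|P|.
Proof. by rewrite -sum1_count sum1_card. Qed.

Section Signature.
Variable C : numClosedFieldType.

Lemma char_poly_normal n (M : 'M[C]_n) : M \is normalmx ->
  char_poly M = \prod_i ('X - (spectral_diag M 0 i)%:P).
Proof.
move=> /orthomx_spectralP {1}->; rewrite char_poly_similar ?spectral_unit //.
by rewrite char_poly_trig ?diag_mx_is_trig //; apply: eq_bigr => i _; rewrite mxE eqxx mulr1n.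
Qed.

Lemma diag_formE n (d y : 'rV[C]_n) :
  (y *m diag_mx d *m (map_mx Num.conj y)^T) 0 0 = \sum_i d 0 i * (y 0 i * (y 0 i)^*).
Proof. by rewrite mul_mx_diag !mxE; apply: eq_bigr => i _; rewrite !mxE mulrAC mulrC. Qed.

Lemma diag_form_isotropic_card n (d : 'rV[C]_n) m (W : 'M[C]_(m, n)) :
  (forall y : 'rV_n, (y <= W)%MS -> \sum_i d 0 i * (y 0 i * (y 0 i)^*) = 0) ->
  (\rank W <= #|[pred i | ~~ (0 < d 0 i)%R]|)%N.
Proof.
(* W meets the span of the coordinate directions where d is positive only in 0. *)
move=> W_iso.
pose Dn := diag_mx (\row_i (if 0 < d 0 i then 0 else 1) : 'rV[C]_n).
have W_cap_ker : (W :&: kermx Dn)%MS = 0.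
  apply/eqP; rewrite -submx0; apply/rV_subP => y.
  rewrite sub_capmx => /andP [yW yK]; rewrite submx0; apply/eqP.
  have y_nonpos i : ~~ (0 < d 0 i) -> y 0 i = 0.
    move=> di_le0; move: yK; rewrite sub_kermx mul_mx_diag => /eqP /matrixP /(_ 0 i).
    by rewrite !mxE (negbTE di_le0) mulr1.
  have terms_ge0 i : true -> 0 <= d 0 i * (y 0 i * (y 0 i)^*).
    move=> _; have [di_gt0|di_le0] := boolP (0 < d 0 i).
      by rewrite mulr_ge0 ?mul_conjC_ge0 ?ltW.
    by rewrite y_nonpos // mul0r mulr0.
  have terms_eq0 := psumr_eq0P terms_ge0 (W_iso y yW).
  apply/rowP => i; rewrite mxE; have [di_gt0|] := boolP (0 < d 0 i); last exact: y_nonpos.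
  move: (terms_eq0 i isT) => /eqP; rewrite mulf_eq0 (gt_eqF di_gt0) mul_conjC_eq0.
  by move/eqP.
have rk_WDn : \rank (W *m Dn) = \rank W.
  by have := mxrank_mul_ker W Dn; rewrite W_cap_ker mxrank0 addn0.
rewrite -rk_WDn; apply: leq_trans (mxrankM_maxr W Dn) _.
apply: leq_trans (rank_diag_mx_le _) _; apply/subset_leq_card/subsetP => i.
by rewrite !inE mxE; case: (0 < d 0 i); rewrite ?eqxx ?oner_eq0.
Qed.

Lemma hermitian_isotropic_signature n (H : 'M[C]_n) m (W : 'M[C]_(m, n)) :
  H \is hermsymmx -> H \in unitmx -> (\rank W + \rank W)%N = n ->
  (forall y : 'rV_n, (y <= W)%MS -> (y *m H *m (map_mx Num.conj y)^T) 0 0 = 0) ->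
  #|[pred i | 0 < spectral_diag H 0 i]| = \rank W.
Proof.
move=> H_herm H_unit rkW W_iso.
set P := spectralmx H; set d := spectral_diag H.
have HE : H = invmx P *m diag_mx d *m P by apply/orthomx_spectralP/hermitian_normalmx.
have d_real i : d 0 i \is Num.real.
  by have /mxOverP := hermitian_spectral_diag_real H_herm; apply.
have d_neq0 i : d 0 i != 0.
  move: H_unit; rewrite unitmxE unitfE HE !det_mulmx det_diag; apply: contraNneq => di0.
  by rewrite (bigD1 i) //= di0 mul0r mulr0 mul0r.
have conjPi : (map_mx Num.conj (invmx P))^T = P.
  rewrite invmx_unitary ?spectral_unitarymx //.
  by apply/matrixP => i j; rewrite !mxE conjCK.
pose W' := W *m invmx P.
have rkW' : \rank W' = \rank W.
  by rewrite mxrankMfree // row_free_unit unitmx_inv spectral_unit.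
have W'_iso (y : 'rV_n) : (y <= W')%MS -> \sum_i d 0 i * (y 0 i * (y 0 i)^*) = 0.
  move=> /submxP [z ->]; rewrite -diag_formE mulmxA -(W_iso (z *m W)) ?submxMl //.
  by rewrite map_mxM trmx_mul conjPi HE !mulmxA.
have W'_iso_opp (y : 'rV_n) : (y <= W')%MS -> \sum_i (- d) 0 i * (y 0 i * (y 0 i)^*) = 0.
  move=> /W'_iso y_iso; under eq_bigr do rewrite mxE mulNr.
  by rewrite sumrN y_iso oppr0.
have le_nonpos := diag_form_isotropic_card W'_iso.
have le_pos : (\rank W <= #|[pred i | (0 < d 0 i)%R]|)%N.
  rewrite -rkW'; apply: leq_trans (diag_form_isotropic_card W'_iso_opp) _.
  apply/subset_leq_card/subsetP => i; rewrite !inE mxE oppr_gt0 real_ltNge ?real0 //.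
  by rewrite negbK le_eqVlt eq_sym (negbTE (d_neq0 i)).
have card_sum : (#|[pred i | (0 < d 0 i)%R]| + #|[pred i | ~~ (0 < d 0 i)%R]|
                 = \rank W + \rank W)%N.
  by rewrite rkW -[RHS]card_ord -(cardC [pred i | (0 < d 0 i)%R]).
apply/eqP; rewrite eqn_leq le_pos andbT -(leq_add2r #|[pred i | ~~ (0 < d 0 i)%R]|).
by rewrite card_sum leq_add2l -rkW'.
Qed.
End Signature.

Notation mxconj := (map_mx conjc).

Section Complexification.
Variable R : rcfType.

Lemma cmxE m n (M : 'M[R]_(m, n)) : cmx M = map_mx (real_complex R) M.
Proof. by apply/matrixP => i j; rewrite !mxE. Qed.

Lemma cmx_inj m n : injective (@cmx R m n).
Proof. by move=> M N; rewrite !cmxE; apply: map_mx_inj. Qed.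

Lemma cmx_sym n (M : 'M[R]_n) : M^T = M -> (cmx M)^T = cmx M.
Proof. by move=> M_sym; rewrite !cmxE map_trmx M_sym. Qed.

Lemma cmx_unit n (M : 'M[R]_n) : M \in unitmx -> cmx M \in unitmx.
Proof. by rewrite cmxE map_unitmx. Qed.

Lemma real_neq_nonreal (l : R) (z : R[i]) : z != conjc z -> (l%:C)%C != z.
Proof. by apply: contraNneq => <-; rewrite conjc_real. Qed.

Lemma mxconjK m n (M : 'M[R[i]]_(m, n)) : mxconj (mxconj M) = M.
Proof. by apply/matrixP => i j; rewrite !mxE conjcK. Qed.

Lemma mxconjZ m n a (M : 'M[R[i]]_(m, n)) : mxconj (a *: M) = conjc a *: mxconj M.
Proof. exact: map_mxZ. Qed.

Lemma mxconj_cmx m n (M : 'M[R]_(m, n)) : mxconj (cmx M) = cmx M.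
Proof. by apply/matrixP => i j; rewrite !mxE /= oppr0. Qed.

End Complexification.

Section BilinearForm.
Variables (K : comNzRingType) (n : nat).
Implicit Types (Q : 'M[K]_n) (u v w : 'rV[K]_n).

Definition bform Q u v : K := (u *m Q *m v^T) 0 0.

Lemma bformDl Q u v w : bform Q (u + v) w = bform Q u w + bform Q v w.
Proof. by rewrite /bform !mulmxDl mxE. Qed.

Lemma bformZl Q a u w : bform Q (a *: u) w = a * bform Q u w.
Proof. by rewrite /bform -!scalemxAl mxE. Qed.

Lemma bformDr Q u v w : bform Q u (v + w) = bform Q u v + bform Q u w.
Proof. by rewrite /bform linearD /= !mulmxDr mxE. Qed.

Lemma bformZr Q a u w : bform Q u (a *: w) = a * bform Q u w.
Proof. by rewrite /bform linearZ /= -!scalemxAr mxE. Qed.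

Lemma bform_sym Q u v : Q^T = Q -> bform Q u v = bform Q v u.
Proof.
move=> Q_sym; have trE (M : 'M[K]_1) : M 0 0 = M^T 0 0 by rewrite mxE.
by rewrite /bform trE !trmx_mul trmxK Q_sym mulmxA.
Qed.

Lemma bform_comb2 Q a b c d u v : Q^T = Q ->
  bform Q (a *: u + b *: v) (c *: u + d *: v) =
  a * c * bform Q u u + (a * d + b * c) * bform Q u v + b * d * bform Q v v.
Proof.
by move=> Q_sym; rewrite !bformDl !bformDr !bformZl !bformZr (bform_sym v u Q_sym); ring.
Qed.

End BilinearForm.

Lemma bform_conj (R : rcfType) n (Q : 'M[R]_n) u v :
  bform (cmx Q) (mxconj u) (mxconj v) = conjc (bform (cmx Q) u v).
Proof. by rewrite /bform -[in LHS](mxconj_cmx Q) map_trmx -!map_mxM mxE. Qed.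

Lemma cmx_realsym_herm (R : rcfType) n (S : 'M[R]_n) : S^T = S -> cmx S \is hermsymmx.
Proof.
move=> S_sym; apply/is_hermitianmxP; rewrite expr0 scale1r.
apply/matrixP => i j; have /matrixP /(_ i j) := S_sym.
by rewrite !mxE /= => ->; rewrite -[RHS]/(conjc _) /= oppr0.
Qed.

Lemma pos_eig_count_realsym (R : rcfType) (S : 'M[R]_4) k : S^T = S ->
  #|[pred i | 0 < spectral_diag (cmx S) 0 i]| = k -> pos_eig_count S k.
Proof.
move=> S_sym; set d := spectral_diag (cmx S) => pos_card.
have S_herm := cmx_realsym_herm S_sym.
have d_real i : d 0 i \is Num.real.
  by have /mxOverP := hermitian_spectral_diag_real S_herm; apply.
exists [seq complex.Re (d 0 i) | i <- index_enum 'I_4]; split.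
  apply: (@map_poly_inj _ _ (real_complex R)).
  rewrite map_char_poly -cmxE char_poly_normal ?hermitian_normalmx // rmorph_prod big_map.
  by apply: eq_bigr => i _; rewrite rmorphB /= map_polyX map_polyC /= RRe_real.
rewrite count_map -pos_card -count_index_enum; apply: eq_count => i /=.
by rewrite -[in RHS](RRe_real (d_real i)) ltcE /= eqxx.
Qed.

Section Pencil.
Variables (R : rcfType) (A B : 'M[R]_4).
Hypotheses (A_sym : A^T = A) (B_sym : B^T = B) (A_unit : A \in unitmx).

(* For such u, [u A] is a left eigenvector of [A^-1 B] for [mu]. *)
Definition pencil_eigen (mu : R[i]) (u : 'rV_4) := u *m cmx B = mu *: (u *m cmx A).

Lemma pencil_eigen_comb mu u v a b :
  pencil_eigen mu u -> pencil_eigen mu v -> pencil_eigen mu (a *: u + b *: v).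
Proof.
rewrite /pencil_eigen => uB vB; rewrite !mulmxDl -!scalemxAl uB vB.
by rewrite !scalerA mulrC [b * _]mulrC -!scalerA scalerDr.
Qed.

Lemma pencil_eigenZ mu a u : pencil_eigen mu u -> pencil_eigen mu (a *: u).
Proof. by rewrite /pencil_eigen -!scalemxAl => ->; rewrite !scalerA mulrC. Qed.

Lemma pencil_eigen_conj mu u : pencil_eigen mu u -> pencil_eigen (conjc mu) (mxconj u).
Proof.
move=> uE; rewrite /pencil_eigen -(mxconj_cmx A) -(mxconj_cmx B) -!map_mxM uE.
exact: mxconjZ.
Qed.

Lemma bform_pencil_eigen mu u w :
  pencil_eigen mu u -> bform (cmx B) u w = mu * bform (cmx A) u w.
Proof. by rewrite /bform /pencil_eigen => ->; rewrite -scalemxAl mxE. Qed.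

Lemma bform_pencil_eigen_orth mu nu u w : mu != nu ->
  pencil_eigen mu u -> pencil_eigen nu w -> bform (cmx A) u w = 0.
Proof.
move=> mu_neq_nu uE wE; have := bform_pencil_eigen w uE.
rewrite bform_sym ?cmx_sym // (bform_pencil_eigen u wE) (bform_sym _ _ (cmx_sym A_sym)).
by move/eqP; rewrite -subr_eq0 -mulrBl mulf_eq0 subr_eq0 eq_sym (negbTE mu_neq_nu) => /eqP.
Qed.

Lemma bform_nondegenerate u : (forall x, bform (cmx A) u x = 0) -> u = 0.
Proof.
move=> u_orth; have uA0 : u *m cmx A = 0.
  apply/rowP => j; have := u_orth (delta_mx 0 j).
  by rewrite /bform trmx_delta -colE !mxE.
have cA_unit := cmx_unit A_unit.
by rewrite -(mulmxK cA_unit u) uA0 mul0mx.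
Qed.

Lemma pencil_eigen_disjoint mu nu u : mu != nu ->
  pencil_eigen mu u -> pencil_eigen nu u -> u = 0.
Proof.
move=> mu_neq_nu; rewrite /pencil_eigen => -> /eqP; rewrite -subr_eq0 -scalerBl.
rewrite scaler_eq0 subr_eq0 (negbTE mu_neq_nu) /= => /eqP uA0.
by apply: bform_nondegenerate => x; rewrite /bform uA0 mul0mx mxE.
Qed.

Lemma cmx_pencil (l : R) : cmx (l *: A - B) = (l%:C)%C *: cmx A - cmx B.
Proof. by rewrite !cmxE map_mxB map_mxZ. Qed.

Lemma pencil_eigen_mul (l : R) nu u : pencil_eigen nu u ->
  u *m cmx (l *: A - B) = ((l%:C)%C - nu) *: (u *m cmx A).
Proof.
by move=> uE; rewrite cmx_pencil mulmxBr -scalemxAr uE scalerBl.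
Qed.

Lemma bform_pencil_eigen_mul (l : R) nu u v : pencil_eigen nu u ->
  bform (cmx (l *: A - B)) u v = ((l%:C)%C - nu) * bform (cmx A) u v.
Proof. by move=> uE; rewrite /bform (pencil_eigen_mul l uE) -scalemxAl mxE. Qed.

Variable mu : R[i].
Hypothesis mu_nonreal : mu != conjc mu.

Lemma free4_conj_of_free2 v1 v2 : pencil_eigen mu v1 -> pencil_eigen mu v2 ->
  free2 v1 v2 -> free4 v1 v2 (mxconj v1) (mxconj v2).
Proof.
move=> v1E v2E v_free a b c d.
rewrite -addrA; set u := a *: v1 + b *: v2; set w := c *: _ + _ => uw0.
have uE : pencil_eigen mu u by apply: pencil_eigen_comb.
have wE : pencil_eigen (conjc mu) w by apply: pencil_eigen_comb; apply: pencil_eigen_conj.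
have w_eq : w = - u by apply/eqP; rewrite -addr_eq0 addrC uw0.
have u0 : u = 0.
  apply: (pencil_eigen_disjoint mu_nonreal uE).
  by move: wE; rewrite /pencil_eigen w_eq !mulNmx scalerN => /oppr_inj.
have [-> ->] := v_free _ _ u0.
have := v_free (conjc c) (conjc d).
rewrite -(mxconjK v1) -(mxconjK v2) -!mxconjZ -map_mxD -/w w_eq u0 oppr0 map_mx0.
by case=> // /eqP; rewrite conjc_eq0 => /eqP -> /eqP; rewrite conjc_eq0 => /eqP ->.
Qed.

Lemma pencil_eigen_eq0 v1 v2 u : pencil_eigen mu v1 -> pencil_eigen mu v2 ->
  free4 v1 v2 (mxconj v1) (mxconj v2) -> pencil_eigen mu u ->
  bform (cmx A) u v1 = 0 -> bform (cmx A) u v2 = 0 -> u = 0.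
Proof.
move=> v1E v2E v_free uE uv1 uv2; apply: bform_nondegenerate => x.
have [a [b [c [d ->]]]] := free4_span v_free x.
have orth v : pencil_eigen mu v -> bform (cmx A) u (mxconj v) = 0.
  by move=> vE; apply: bform_pencil_eigen_orth mu_nonreal uE (pencil_eigen_conj vE).
by rewrite !bformDr !bformZr uv1 uv2 !orth // !mulr0 !addr0.
Qed.

Hypothesis mu_rank : \rank (mu%:M - invmx (cmx A) *m cmx B) = 2%N.

Lemma pencil_eigen_basis :
  exists v1 v2, [/\ pencil_eigen mu v1, pencil_eigen mu v2 & free2 v1 v2].
Proof.
have cA_unit := cmx_unit A_unit.
pose K := mu%:M - invmx (cmx A) *m cmx B.
have rkK : \rank (kermx K) = (1 + 1)%N by rewrite mxrank_ker mu_rank.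
move: (row_base (kermx K)) (row_base_free (kermx K)) (eq_row_base (kermx K)).
rewrite rkK => V V_free V_ker.
have kerE (u : 'rV_4) : (u <= kermx K)%MS -> pencil_eigen mu (u *m invmx (cmx A)).
  rewrite /pencil_eigen mulmxKV // => /sub_kermxP.
  by rewrite /K mulmxBr mul_mx_scalar mulmxA => /eqP; rewrite subr_eq0 => /eqP.
have : (V <= kermx K)%MS by rewrite V_ker.
rewrite -[V]vsubmxK col_mx_sub => /andP [/kerE uE /kerE vE].
exists (usubmx V *m invmx (cmx A)), (dsubmx V *m invmx (cmx A)); split => //.
apply/free2P; rewrite -mul_col_mx mxrankMfree ?vsubmxK ?(eqP V_free) //.
by rewrite row_free_unit unitmx_inv.
Qed.

Lemma on_qsic_eigen_sum u w : pencil_eigen mu u -> pencil_eigen (conjc mu) w ->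
  on_qsic A B (u + w) <-> bform (cmx A) u u = 0 /\ bform (cmx A) w w = 0.
Proof.
move=> uE wE; have uw0 := bform_pencil_eigen_orth mu_nonreal uE wE.
have wu0 : bform (cmx A) w u = 0.
  by apply: bform_pencil_eigen_orth wE uE; rewrite eq_sym.
have qA : bform (cmx A) (u + w) (u + w) = bform (cmx A) u u + bform (cmx A) w w.
  by rewrite bformDl !bformDr uw0 wu0 addr0 add0r.
have qB : bform (cmx B) (u + w) (u + w) =
          mu * bform (cmx A) u u + conjc mu * bform (cmx A) w w.
  rewrite bformDl (bform_pencil_eigen _ uE) (bform_pencil_eigen _ wE) !bformDr.
  by rewrite uw0 wu0 addr0 add0r.
rewrite /on_qsic /on_quadric -/(bform _ _ _) -/(bform _ _ _) qA qB.
split => [[qA0 qB0] | [-> ->]]; last by rewrite !mulr0 addr0.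
have ww0 : bform (cmx A) w w = 0.
  have : (conjc mu - mu) * bform (cmx A) w w = 0.
    have -> : (conjc mu - mu) * bform (cmx A) w w =
      mu * bform (cmx A) u u + conjc mu * bform (cmx A) w w
      - mu * (bform (cmx A) u u + bform (cmx A) w w) by ring.
    by rewrite qA0 qB0 mulr0 subrr.
  by move/eqP; rewrite mulf_eq0 subr_eq0 eq_sym (negbTE mu_nonreal) => /eqP.
by split => //; move: qA0; rewrite ww0 addr0.
Qed.

Lemma isotropic_eigenbasis : exists e1 e2,
  [/\ pencil_eigen mu e1, pencil_eigen mu e2, free4 e1 e2 (mxconj e1) (mxconj e2),
      bform (cmx A) e1 e1 = 0 & bform (cmx A) e2 e2 = 0].
Proof.
have [v1 [v2 [v1E v2E v_free]]] := pencil_eigen_basis.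
have cA_sym := cmx_sym A_sym.
set p := bform (cmx A) v1 v1; set r := bform (cmx A) v1 v2; set t := bform (cmx A) v2 v2.
have nondeg a b : a * p + b * r = 0 -> a * r + b * t = 0 -> a = 0 /\ b = 0.
  move=> abv1 abv2; apply: (v_free).
  apply: (pencil_eigen_eq0 v1E v2E (free4_conj_of_free2 v1E v2E v_free)).
  - exact: pencil_eigen_comb.
  - by rewrite bformDl !bformZl (bform_sym v2 v1 cA_sym).
  - by rewrite bformDl !bformZl.
have [a1 [b1 [a2 [b2 [iso1 iso2 det_neq0]]]]] := isotropic_pair nondeg.
have e1E : pencil_eigen mu (a1 *: v1 + b1 *: v2) by apply: pencil_eigen_comb.
have e2E : pencil_eigen mu (a2 *: v1 + b2 *: v2) by apply: pencil_eigen_comb.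
exists (a1 *: v1 + b1 *: v2), (a2 *: v1 + b2 *: v2); split => //.
- exact/(free4_conj_of_free2 e1E e2E)/free2_lincomb.
- by rewrite bform_comb2 // -/p -/r -/t -iso1; ring.
- by rewrite bform_comb2 // -/p -/r -/t -iso2; ring.
Qed.

Section IsotropicEigenbasis.
Variables e1 e2 : 'rV[R[i]]_4.
Hypotheses (e1E : pencil_eigen mu e1) (e2E : pencil_eigen mu e2).
Hypothesis e_free : free4 e1 e2 (mxconj e1) (mxconj e2).
Hypotheses (e1_iso : bform (cmx A) e1 e1 = 0) (e2_iso : bform (cmx A) e2 e2 = 0).

Lemma bform_e12_neq0 : bform (cmx A) e1 e2 != 0.
Proof.
apply/eqP => e12_0; have e1_0 := pencil_eigen_eq0 e1E e2E e_free e1E e1_iso e12_0.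
have := @e_free 1 0 0 0; rewrite e1_0 scaler0 !scale0r !addr0 => /(_ erefl) [/eqP].
by rewrite oner_eq0.
Qed.

Lemma on_qsic_comb a b c d :
  on_qsic A B (a *: e1 + b *: e2 + c *: mxconj e1 + d *: mxconj e2) <->
  (a = 0 \/ b = 0) /\ (c = 0 \/ d = 0).
Proof.
have e12_neq0 := bform_e12_neq0.
have ce12_neq0 : conjc (bform (cmx A) e1 e2) != 0 by rewrite conjc_eq0.
have uE : pencil_eigen mu (a *: e1 + b *: e2) by apply: pencil_eigen_comb.
have wE : pencil_eigen (conjc mu) (c *: mxconj e1 + d *: mxconj e2).
  by apply: pencil_eigen_comb; apply: pencil_eigen_conj.
have null_eq0 (x y k : R[i]) : k != 0 -> (x * y + y * x) * k = 0 <-> x = 0 \/ y = 0.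
  move=> k_neq0; rewrite [y * x]mulrC -mulr2n -mulr_natl.
  split => [/eqP | [] ->]; rewrite ?(mul0r, mulr0) //.
  by rewrite !mulf_eq0 pnatr_eq0 (negbTE k_neq0) orbF /= => /orP [] /eqP; [left | right].
rewrite -addrA; apply: (iff_trans (on_qsic_eigen_sum uE wE)).
rewrite !bform_comb2 ?cmx_sym // e1_iso e2_iso !bform_conj e1_iso e2_iso conjc0.
rewrite !mulr0 !addr0 !add0r.
by split => [[/null_eq0 ab0 /null_eq0 cd0] | [/null_eq0 ab0 /null_eq0 cd0]]; auto.
Qed.

Lemma qsic_four_lines X : on_qsic A B X <->
  [\/ (X <= col_mx e1 (mxconj e1))%MS, (X <= col_mx e2 (mxconj e2))%MS,
      (X <= col_mx e1 (mxconj e2))%MS | (X <= col_mx e2 (mxconj e1))%MS].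
Proof.
have [a [b [c [d ->]]]] := free4_span e_free X.
have [on11 on22 on12 on21] := sub_col_mx_free4 a b c d e_free.
apply: (iff_trans (on_qsic_comb a b c d)).
split => [[[a0 | b0] [c0 | d0]] | ].
- by apply: Or42; apply/on22.
- by apply: Or44; apply/on21.
- by apply: Or43; apply/on12.
- by apply: Or41; apply/on11.
by case=> [/on11 | /on22 | /on12 | /on21] [-> ->]; auto.
Qed.

Lemma pencil_eigen_decomposition x :
  exists u w, [/\ pencil_eigen mu u, pencil_eigen (conjc mu) w & x = u + w].
Proof.
have [a [b [c [d ->]]]] := free4_span e_free x.
exists (a *: e1 + b *: e2), (c *: mxconj e1 + d *: mxconj e2); split.
- exact: pencil_eigen_comb.
- by apply: pencil_eigen_comb; apply: pencil_eigen_conj.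
- by rewrite addrA.
Qed.

Lemma pencil_real_unit (l : R) : cmx (l *: A - B) \in unitmx.
Proof.
have l_neq_mu := real_neq_nonreal l mu_nonreal.
have l_neq_cmu : (l%:C)%C != conjc mu by apply: real_neq_nonreal; rewrite conjcK eq_sym.
rewrite -row_free_unit; apply: row_free_of_ker0 => x.
have [u [w [uE wE ->]]] := pencil_eigen_decomposition x.
rewrite mulmxDl (pencil_eigen_mul l uE) (pencil_eigen_mul l wE) !scalemxAl -mulmxDl.
move/eqP; rewrite mulmx_free_eq0 ?row_free_unit ?cmx_unit // => /eqP uw0.
have u0 : u = 0.
  have : ((l%:C)%C - mu) *: u = 0.
    apply: (pencil_eigen_disjoint mu_nonreal); first exact: pencil_eigenZ.
    by rewrite -[_ *: u]subr0 -uw0 opprD addNKr -scaleNr; apply: pencil_eigenZ.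
  by move/eqP; rewrite scaler_eq0 subr_eq0 (negbTE l_neq_mu) => /eqP.
move: uw0; rewrite u0 scaler0 add0r => /eqP.
by rewrite scaler_eq0 subr_eq0 (negbTE l_neq_cmu) => /eqP ->; rewrite addr0.
Qed.

Lemma pencil_isotropic_plane (l : R) y : (y <= col_mx e1 (mxconj e1))%MS ->
  bform (cmx (l *: A - B)) y (mxconj y) = 0.
Proof.
have S_sym : (l *: A - B)^T = l *: A - B by rewrite linearB linearZ /= A_sym B_sym.
have ce1E := pencil_eigen_conj e1E.
move=> /sub_col_mx2P [a [c ->]].
rewrite map_mxD !mxconjZ mxconjK [_ *: mxconj e1 + _]addrC bform_comb2 ?cmx_sym //.
rewrite !(bform_pencil_eigen_mul l _ e1E) (bform_pencil_eigen_mul l _ ce1E).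
rewrite e1_iso bform_conj e1_iso conjc0.
by rewrite (bform_pencil_eigen_orth mu_nonreal e1E ce1E) !mulr0 !addr0.
Qed.

Lemma pencil_pos_eig_count (l : R) : pos_eig_count (l *: A - B) 2%N.
Proof.
have S_sym : (l *: A - B)^T = l *: A - B by rewrite linearB linearZ /= A_sym B_sym.
have rkW : \rank (col_mx e1 (mxconj e1)) = 2%N by apply/free2P/(free4_free2_13 e_free).
apply: (pos_eig_count_realsym S_sym); rewrite -[X in _ = X]rkW.
apply: hermitian_isotropic_signature; rewrite ?cmx_realsym_herm ?pencil_real_unit ?rkW //.
exact: pencil_isotropic_plane.
Qed.

End IsotropicEigenbasis.
End Pencil.

Section RealLines.
Variable R : rcfType.

Lemma cmx_Re_selfconj (x : 'rV[R[i]]_4) :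
  mxconj x = x -> cmx (map_mx (@complex.Re R) x) = x.
Proof.
move=> /rowP x_real; apply/rowP => j; move: (x_real j).
by rewrite !mxE => /CrealP/RRe_real.
Qed.

Lemma real_line_conj_pair (e : 'rV[R[i]]_4) :
  free2 e (mxconj e) -> real_line (col_mx e (mxconj e)).
Proof.
(* Distinct k give independent points since c_k conj c_l - c_l conj c_k = 2 i (k - l). *)
move=> e_free n; pose c (k : nat) : R[i] := (1 +i* k%:R)%C.
pose x k := c k *: e + conjc (c k) *: mxconj e.
have x_real k : mxconj (x k) = x k.
  by rewrite map_mxD !mxconjZ mxconjK conjcK addrC.
have c_neq0 k : c k != 0 by apply/eqP => -[] /eqP; rewrite oner_eq0.
exists (fun k : 'I_n => map_mx (@complex.Re R) (x k)); split.
  move=> k; rewrite !cmx_Re_selfconj //; split.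
    apply/eqP => /(congr1 (@cmx R 1 4)); rewrite cmx_Re_selfconj // cmxE map_mx0.
    by move=> /e_free [/eqP]; rewrite (negbTE (c_neq0 k)).
  by apply/sub_col_mx2P; exists (c k), (conjc (c k)).
move=> k l k_neq_l; rewrite -(mxrank_map (real_complex R)) map_col_mx -!cmxE.
rewrite !cmx_Re_selfconj //; apply/free2P/free2_lincomb => //.
rewrite /c; simpc; apply/eqP => -[_] /eqP.
have -> : 1 *- l + k%:R + (k%:R - l%:R) = 2 * (k%:R - l%:R) :> R by ring.
rewrite mulf_eq0 pnatr_eq0 subr_eq0 eqr_nat /=.
by apply/negP; apply: contra k_neq_l => /eqP kl; apply/eqP/val_inj.
Qed.

Lemma not_real_line (f1 f2 : 'rV[R[i]]_4) :
  free4 f1 f2 (mxconj f1) (mxconj f2) -> ~ real_line (col_mx f1 (mxconj f2)).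
Proof.
move=> f_free /(_ 1%N) [p [/(_ ord0) [p_neq0 /sub_col_mx2P [x [y p_eq]]] _]].
have p_conj : cmx (p ord0) = conjc y *: f2 + conjc x *: mxconj f1.
  by rewrite -mxconj_cmx p_eq map_mxD !mxconjZ mxconjK addrC.
have [x0 _ _ y0] : [/\ x = 0, 0 = conjc y, 0 = conjc x & y = 0].
  apply: (free4_coef f_free); rewrite !scale0r !addr0 !add0r -p_eq.
  by rewrite p_conj addrC.
move/eqP: p_neq0; apply; apply: cmx_inj.
by rewrite p_eq x0 y0 !scale0r addr0 cmxE map_mx0.
Qed.

End RealLines.

Lemma nonreal_conj_neq (R : rcfType) (z : R[i]) : 'Im z != 0 -> z != conjc z.
Proof.
by apply: contraNneq => z_eq; apply/eqP/Creal_ImP/CrealP; rewrite [RHS]z_eq.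
Qed.

Theorem theorem20 (R : rcfType) (A B : 'M[R]_4) :
  A^T = A -> B^T = B ->
  pencil_poly A B != 0 ->
  two_conj_double_roots A B ->
  segre_11_11_conj A B ->
  (* index sequence <2>: Id(lambda) = 2 for every real lambda *)
  (forall l : R, pos_eig_count (l *: A - B) 2) /\
  (* QSIC = two non-intersecting real lines + two non-intersecting imaginary lines *)
  exists L1 L2 L3 L4 : 'M[complex R]_(2, 4),
    [/\ is_line L1 /\ is_line L2 /\ is_line L3 /\ is_line L4,
        real_line L1 /\ real_line L2,
        ~ real_line L3 /\ ~ real_line L4,
        lines_disjoint L1 L2 /\ lines_disjoint L3 L4 &
        forall X : 'rV[complex R]_4, X != 0 ->
          (on_qsic A B X <->
           [\/ (X <= L1)%MS, (X <= L2)%MS, (X <= L3)%MS | (X <= L4)%MS])].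
Proof.
move=> A_sym B_sym _ _ [A_unit [mu [Im_mu /= [_ mu_rank _]]]].
have mu_nonreal := nonreal_conj_neq Im_mu.
have [e1 [e2 [e1E e2E e_free e1_iso e2_iso]]] :=
  isotropic_eigenbasis A_sym B_sym A_unit mu_nonreal mu_rank.
have e_free34 := free4_swap34 e_free; have e_free12 := free4_swap12 e_free.
have e_free' := free4_swap12 e_free34.
split.
  exact: (pencil_pos_eig_count A_sym B_sym A_unit mu_nonreal e1E e2E e_free e1_iso).
exists (col_mx e1 (mxconj e1)), (col_mx e2 (mxconj e2)),
       (col_mx e1 (mxconj e2)), (col_mx e2 (mxconj e1)); split.
- by do !split; apply/free2P/free4_free2_13;
    [exact: e_free | exact: e_free' | exact: e_free34 | exact: e_free12].
- by split; apply/real_line_conj_pair/free4_free2_13; [exact: e_free | exact: e_free'].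
- by split; apply: not_real_line; [exact: e_free | exact: e_free'].
- by split=> X; apply: col_mx_free4_disjoint; [exact: e_free | exact: e_free34].
- move=> X _.
  exact: (qsic_four_lines A_sym B_sym A_unit mu_nonreal e1E e2E e_free e1_iso e2_iso).
Qed.
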